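(* Let $n\ge 2$ and let $\mathcal{B}$ be a nonempty subset of $\mathbb{S}^n$. Suppose that there exist positive numbers $\alpha_B>0$ $(B\in\mathcal{B})$ such that $\alpha_A A+\alpha_B B\in\mathbb{S}^n_+$ for every distinct pair $A,B\in\mathcal{B}$ (Condition (D)). Then: (1) (Condition (B)) for every $B\in\mathcal{B}$, $$\{X\in\mathbb{S}^n_+ : B\bullet X=0\}\subseteq\{X\in\mathbb{S}^n_+ : A\bullet X\ge 0 \text{ for all } A\in\mathcal{B}\};$$ (2) (Condition (B)') for every distinct pair $A,B\in\mathcal{B}$, $A_<\cap B_\le=\emptyset$, where for $C\in\mathbb{S}^n$, $$C_< = \left\{u\in\mathbb{R}^{n-1} : \begin{pmatrix}u\\1\end{pmatrix}^T C\begin{pmatrix}u\\1\end{pmatrix}<0\right\},\qquad C_\le = \left\{u\in\mathbb{R}^{n-1} : \begin{pmatrix}u\\1\end{pmatrix}^T C\begin{pmatrix}u\\1\end{pmatrix}\le 0\right\}.$$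
   Context: $\mathbb{S}^n$ denotes the space of real $n\times n$ symmetric matrices, $\mathbb{S}^n_+$ the cone of positive semidefinite matrices in $\mathbb{S}^n$, and $A\bullet X=\sum_{i,j}A_{ij}X_{ij}$ the trace inner product. *)

From HB Require Import structures.
From mathcomp Require Import all_boot all_order all_algebra.
Set Implicit Arguments. Unset Strict Implicit. Unset Printing Implicit Defensive.
Import Order.TTheory GRing.Theory Num.Theory.
Local Open Scope ring_scope.

Section Defs.
Variable R : realFieldType.

Definition symmx (n : nat) (A : 'M[R]_n) : Prop := A^T = A.

Definition qform (n : nat) (C : 'M[R]_n) (v : 'cV[R]_n) : R := (v^T *m C *m v) 0 0.

Definition psd (n : nat) (A : 'M[R]_n) : Prop :=
  symmx A /\ forall x : 'cV[R]_n, 0 <= qform A x.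

Definition frob (n : nat) (A X : 'M[R]_n) : R := \sum_(i < n) \sum_(j < n) A i j * X i j.

(* the vector (u; 1) in R^n for u in R^(n-1) *)
Definition homog (n : nat) (u : 'cV[R]_(n.-1)) : 'cV[R]_n :=
  \col_(i < n) (if @insub nat (fun k => (k < n.-1)%N) 'I_(n.-1) (val i) is Some k then u k 0 else 1).

Definition Clt (n : nat) (C : 'M[R]_n) (u : 'cV[R]_(n.-1)) : Prop := qform C (homog u) < 0.
Definition Cle (n : nat) (C : 'M[R]_n) (u : 'cV[R]_(n.-1)) : Prop := qform C (homog u) <= 0.
End Defs.

From mathcomp Require Import all_boot all_order all_algebra.
From mathcomp Require Import ring lra.
Import Order.TTheory GRing.Theory Num.Theory.
Local Open Scope ring_scope.

(* Part (2) is immediate: at (u; 1) the quadratic form of the positive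
   semidefinite matrix alpha_A A + alpha_B B would be negative.  Part (1)
   follows from (alpha_A A + alpha_B B) . X >= 0, i.e. from the nonnegativity
   of the trace inner product of two positive semidefinite matrices.  Over an
   arbitrary real field there is no spectral theorem, so instead symmetric
   Gaussian elimination writes a positive semidefinite X as a nonnegative
   combination of rank-one matrices c c^T, and P . c c^T = c^T P c >= 0. *)

Section QuadraticForms.
Context {R : realFieldType} {n : nat}.
Implicit Types (A B C P X : 'M[R]_n) (u v x c : 'cV[R]_n).

Definition bform C u v : R := (u^T *m C *m v) 0 0.

Lemma qformDl C1 C2 v : qform (C1 + C2) v = qform C1 v + qform C2 v.
Proof. by rewrite /qform mulmxDr mulmxDl mxE. Qed.

Lemma qformZl a C v : qform (a *: C) v = a * qform C v.
Proof. by rewrite /qform -scalemxAr -scalemxAl mxE. Qed.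

Lemma bformC C u v : symmx C -> bform C u v = bform C v u.
Proof.
move=> symC; rewrite /bform -[in LHS](trmxK (u^T *m C *m v)) [in LHS]mxE.
by rewrite !trmx_mul trmxK symC mulmxA.
Qed.

Lemma qform_comb C s t u v : symmx C ->
  qform C (s *: u + t *: v) =
  s ^+ 2 * qform C u + 2 * s * t * bform C u v + t ^+ 2 * qform C v.
Proof.
move=> symC; have buv := bformC C u v symC.
rewrite /qform /bform in buv *.
rewrite [(_ + _)^T]linearD 2!linearZ /= !mulmxDl !mulmxDr.
rewrite -!scalemxAl -!scalemxAr.
move: (u^T *m C *m u) (u^T *m C *m v) (v^T *m C *m u) (v^T *m C *m v) buv.
by move=> Muu Muv Mvu Mvv eqMuv; rewrite !mxE eqMuv; ring.
Qed.

Lemma bform_delta C i j : bform C (delta_mx i 0) (delta_mx j 0) = C i j.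
Proof. by rewrite /bform trmx_delta -rowE -colE !mxE. Qed.

Lemma qform_delta C i : qform C (delta_mx i 0) = C i i.
Proof. exact: bform_delta. Qed.

Lemma psd_cauchy_schwarz C u v : psd C ->
  bform C u v ^+ 2 <= qform C u * qform C v.
Proof.
move=> [symC qC]; have qu_ge0 := qC u; have qv_ge0 := qC v.
(* With b = bform C u v, the form at the two test points below is
   -b^2 (qform C u + 2), resp. qform C v (qform C v * qform C u - b^2). *)
have [qv0 | qv_neq0] := eqVneq (qform C v) 0.
  have := qC (bform C u v *: u + (- (qform C u + 1)) *: v).
  rewrite qform_comb // qv0; nra.
have qv_gt0 : 0 < qform C v by rewrite lt_def qv_neq0.
have := qC (qform C v *: u + (- bform C u v) *: v).
rewrite qform_comb //; nra.
Qed.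

Lemma psd_entry_sq X i j : psd X -> X i j ^+ 2 <= X i i * X j j.
Proof. by move=> psdX; rewrite -!bform_delta; apply: psd_cauchy_schwarz. Qed.

Lemma psd_diag_eq0 X i j : psd X -> X i i = 0 -> X i j = 0.
Proof.
move=> psdX Xii0; have := psd_entry_sq X i j psdX.
rewrite Xii0 mul0r => sq_le0.
by apply/eqP; rewrite -sqrf_eq0 eq_le sq_le0 sqr_ge0.
Qed.

Lemma qform_rank1 c x : qform (c *m c^T) x = ((x^T *m c) 0 0) ^+ 2.
Proof.
rewrite /qform !mulmxA -[x^T *m c *m c^T *m x]mulmxA.
rewrite -[c^T *m x]trmxK trmx_mul trmxK.
by move: (x^T *m c) => M; rewrite mxE big_ord1 mxE expr2.
Qed.

Lemma symmxE C i j : symmx C -> C i j = C j i.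
Proof. by move=> symC; rewrite -[in LHS]symC mxE. Qed.

(* If X p p = 0 the pivot column of a psd X vanishes, so the junk value
   0^-1 = 0 harmlessly gives pivot_elim X p = X. *)
Definition pivot_elim X p := X - (X p p)^-1 *: (col p X *m (col p X)^T).

Lemma pivot_elimE X p i j :
  pivot_elim X p i j = X i j - (X p p)^-1 * (X i p * X j p).
Proof. by rewrite !mxE big_ord1 !mxE. Qed.

Lemma psd_pivot_elim X p : psd X -> psd (pivot_elim X p).
Proof.
move=> psdX; have [symX qX] := psdX; split.
  by rewrite /symmx /pivot_elim linearB linearZ /= trmx_mul trmxK symX.
move=> x; rewrite /pivot_elim qformDl -scaleNr qformZl qform_rank1.
have := psd_cauchy_schwarz X x (delta_mx p 0) psdX.
rewrite /bform colE mulmxA qform_delta mulNr subr_ge0.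
have [-> _ | Xpp_neq0 cs] := eqVneq (X p p) 0; first by rewrite invr0 mul0r qX.
have Xpp_gt0 : 0 < X p p by rewrite lt_def Xpp_neq0 -qform_delta qX.
by rewrite ler_pdivrMl // mulrC.
Qed.

Lemma pivot_elim_row X p j : psd X -> pivot_elim X p p j = 0.
Proof.
move=> psdX; rewrite pivot_elimE (symmxE X j p (proj1 psdX)).
have [Xpp0 | Xpp_neq0] := eqVneq (X p p) 0.
  by rewrite (psd_diag_eq0 X p j psdX Xpp0) !mulr0 subr0.
by rewrite mulrA mulVf // mul1r subrr.
Qed.

Lemma psd_rank1_decomposition X : psd X ->
  exists2 s : seq (R * 'cV[R]_n), all (fun wc => 0 <= wc.1) s &
    X = \sum_(wc <- s) wc.1 *: (wc.2 *m wc.2^T).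
Proof.
move=> psdX; have : forall i j, i \notin enum 'I_n -> X i j = 0.
  by move=> i j; rewrite mem_enum.
elim: (enum 'I_n) X psdX => [|p r IHr] X psdX X_supp.
  by exists [::]; rewrite // big_nil; apply/matrixP => i j; rewrite mxE X_supp.
have [|s s_ge0 defY] := IHr (pivot_elim X p) (psd_pivot_elim X p psdX).
  move=> i j i_notin_r; have [-> | i_neq_p] := eqVneq i p.
    exact: pivot_elim_row.
  have i_out : i \notin p :: r by rewrite inE negb_or i_neq_p.
  by rewrite pivot_elimE !(X_supp i) // mul0r mulr0 subr0.
exists [:: ((X p p)^-1, col p X) & s].
  by rewrite /= s_ge0 invr_ge0 -qform_delta andbT; case: psdX.
by rewrite big_cons -defY /pivot_elim addrC subrK.
Qed.

Lemma frobE A X : frob A X = \tr (A^T *m X).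
Proof.
rewrite /frob /mxtrace exchange_big; apply: eq_bigr => i _.
by rewrite mxE; apply: eq_bigr => j _; rewrite mxE.
Qed.

Lemma frobDl A B X : frob (A + B) X = frob A X + frob B X.
Proof. by rewrite !frobE linearD mulmxDl mxtraceD. Qed.

Lemma frobZl a A X : frob (a *: A) X = a * frob A X.
Proof. by rewrite !frobE linearZ -scalemxAl mxtraceZ. Qed.

Lemma frob_rank1 P c : frob P (c *m c^T) = qform P c.
Proof.
rewrite frobE mxtrace_mulC -mulmxA mxtrace_mulC -mxtrace_tr.
by rewrite !trmx_mul !trmxK mulmxA trace_mx11.
Qed.

Lemma frob_psd_ge0 P X : psd P -> psd X -> 0 <= frob P X.
Proof.
move=> [_ qP] /psd_rank1_decomposition[s s_ge0 ->].
rewrite frobE mulmx_sumr raddf_sum big_seq sumr_ge0 // => -[w c].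
move=> /(allP s_ge0) /= w_ge0.
by rewrite -scalemxAr mxtraceZ -frobE frob_rank1 mulr_ge0.
Qed.

End QuadraticForms.

Theorem theorem1p1 (R : realFieldType) (n : nat) (Bset : 'M[R]_n -> Prop)
  (alpha : 'M[R]_n -> R) :
  (2 <= n)%N ->
  (forall B, Bset B -> symmx B) ->
  (exists B, Bset B) ->
  (forall B, Bset B -> 0 < alpha B) ->
  (forall A B, Bset A -> Bset B -> A <> B -> psd (alpha A *: A + alpha B *: B)) ->
  (forall B, Bset B -> forall X : 'M[R]_n, psd X -> frob B X = 0 ->
      forall A, Bset A -> 0 <= frob A X) /\
  (forall A B, Bset A -> Bset B -> A <> B ->
      forall u : 'cV[R]_(n.-1), ~ (Clt A u /\ Cle B u)).
Proof.
move=> _ _ _ alpha_gt0 condD; split.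
  move=> B hB X psdX BX0 A hA.
  have [-> | /eqP neqAB] := eqVneq A B; first by rewrite BX0.
  have := frob_psd_ge0 _ _ (condD A B hA hB neqAB) psdX.
  by rewrite frobDl !frobZl BX0 mulr0 addr0 pmulr_rge0 // alpha_gt0.
move=> A B hA hB neqAB u [ltA leB].
have [_ /(_ (homog u))] := condD A B hA hB neqAB.
rewrite qformDl !qformZl.
have := alpha_gt0 A hA; have := alpha_gt0 B hB.
rewrite /Clt /Cle in ltA leB; nra.
Qed.
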